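(* Let $p$ be an odd prime and let $G=F\rtimes H$ be a metabelian Frobenius group with Frobenius kernel $F\cong C_p\times C_p$ and cyclic Frobenius complement $H$ of order $m$ dividing $p-1$, such that $G$ has exactly $p+1$ conjugacy classes of subgroups of order $p$. Let $Q_1=\{1\}$, let $Q_2,\dots,Q_{p+2}$ be the $p+1$ subgroups of order $p$ of $F$, and $Q_{p+3}=F$. Then: (a) $N_G(Q_v)=G$ and $N_G(Q_v)/Q_v=G/Q_v$ for every $1\le v\le p+3$; (b) for every $1\le v\le p+2$, $G/Q_v$ is a Frobenius group with Frobenius complement $HQ_v/Q_v\cong H$ and Frobenius kernel $F/Q_v$.
   Context: A Frobenius group with complement $H$: $1\ne H<G$ with $H\cap gHg^{-1}=1$ for all $g\in G\setminus H$; its Frobenius kernel $F=\{1\}\cup(G\setminus\bigcup_g gHg^{-1})$ is a normal subgroup with $G=F\rtimes H$. *)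

From mathcomp Require Import all_boot all_fingroup all_solvable.
Set Implicit Arguments. Unset Strict Implicit. Unset Printing Implicit Defensive.
Local Open Scope group_scope.

Definition num_conj_classes_subgroups_of_order (gT : finGroupType)
    (G : {set gT}) (n : nat) : nat :=
  #|[set K :^: G | K in [set K : {set gT} | [&& K \subset G, group_set K & #|K| == n]]]|.

From mathcomp Require Import all_boot all_fingroup all_solvable all_algebra.
Local Open Scope group_scope.

(* Every subgroup of order p of G is a p-subgroup, hence lies in the normal
   Hall subgroup F; as F is elementary abelian of rank 2 there are only p+1 of
   them.  So p+1 conjugacy classes force every class to be a singleton: each
   subgroup of order p of F is normal in G.  Factoring a Frobenius group by a
   normal subgroup properly contained in its kernel gives again a Frobenius
   group, and the complement maps isomorphically since it meets the kernel
   trivially. *)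

Definition subgroups_of_order {gT : finGroupType} (G : {set gT}) (n : nat) :=
  [set K : {set gT} | [&& K \subset G, group_set K & #|K| == n]].

Lemma subgroups_of_orderJ {gT : finGroupType} (G : {group gT}) n K g :
  K \in subgroups_of_order G n -> g \in G -> K :^ g \in subgroups_of_order G n.
Proof.
rewrite !inE => /and3P[sKG gK oK] Gg.
by rewrite -{1}(conjGid Gg) conjSg sKG cardJg oK (groupP (Group gK :^ g)%G).
Qed.

Lemma subgroups_of_order_norm {gT : finGroupType} {G K : {group gT}} {n : nat} :
    K \subset G -> #|K| = n ->
    #|subgroups_of_order G n| <= num_conj_classes_subgroups_of_order G n ->
  G \subset 'N(K).
Proof.
move=> sKG oK le_subgroups_classes.
have SK : gval K \in subgroups_of_order G n by rewrite inE sKG groupP oK eqxx.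
have injS : {in subgroups_of_order G n &, injective (fun X => X :^: G)}.
  by apply/imset_injP; rewrite eqn_leq leq_imset_card.
apply/subsetP => g Gg; rewrite inE (injS (K :^ g) K) ?subgroups_of_orderJ //=.
by rewrite conjugates_conj lcoset_id.
Qed.

Section FrobeniusKernel.

Context {gT : finGroupType} {G K H : {group gT}}.
Hypothesis frobG : [Frobenius G = K ><| H].

Lemma Frobenius_ker_sub_pgroup p (P : {group gT}) :
  p \in \pi(K) -> P \subset G -> p.-group P -> P \subset K.
Proof.
move=> piKp sPG pP.
have [defG _ _ _ _] := Frobenius_context frobG.
have [nsKG _ _ _ _] := sdprod_context defG.
rewrite (sub_normal_Hall (Hall_pi (Frobenius_ker_Hall frobG)) nsKG sPG).
by apply: sub_pgroup pP => q /eqnP->.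
Qed.

Lemma Frobenius_card_subgroups_of_prime_order p :
  prime p -> p \in \pi(K) -> #|subgroups_of_order G p| <= #|'E_p^1(K)|.
Proof.
move=> p_pr piKp; apply: leq_trans (leq_imset_card (@gval gT) _).
apply/subset_leq_card/subsetP => X; rewrite inE => /and3P[sXG gX /eqP oX].
apply/imsetP; exists (Group gX) => //; rewrite p1ElemE // !inE oX eqxx andbT.
by apply: (Frobenius_ker_sub_pgroup p (Group gX)) => //; rewrite /pgroup oX pnat_id.
Qed.

Lemma Frobenius_quotient (N : {group gT}) :
  N <| G -> N \proper K -> [Frobenius G / N = (K / N) ><| (H / N)].
Proof.
move=> nsNG ltNK; have [defG _ ntH _ _] := Frobenius_context frobG.
apply: Frobenius_coprime_quotient defG nsNG (conj (Frobenius_coprime frobG) ntH) _.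
by split=> // x Hx; rewrite (Frobenius_reg_ker frobG Hx) sub1G.
Qed.

Lemma Frobenius_compl_quotient_isog (N : {group gT}) :
  N \subset K -> H \subset 'N(N) -> H / N \isog H.
Proof.
move=> sNK nNH; have [defG _ _ _ _] := Frobenius_context frobG.
have [_ _ _ _ tiKH] := sdprod_context defG.
by rewrite isog_sym quotient_isog //; apply/trivgP; rewrite -tiKH setSI.
Qed.

End FrobeniusKernel.

Lemma abelem_Zp2 p : prime p -> p.-abelem [set: 'Z_p * 'Z_p].
Proof.
move=> p_pr.
have abelZp : p.-abelem [set: 'Z_p].
  by rewrite prime_abelem // cardsT card_ord Zp_cast ?prime_gt1.
have -> : [set: 'Z_p * 'Z_p] = setX [set: 'Z_p] [set: 'Z_p].
  by apply/setP => -[a b]; rewrite !inE.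
rewrite (dprod_abelem _ (setX_dprod [set: 'Z_p]%G [set: 'Z_p]%G)).
by rewrite -(isog_abelem (isog_setX1 _ _)) -(isog_abelem (isog_set1X _ _)) abelZp.
Qed.

Lemma isog_Zp2_p2Elem {gT : finGroupType} (F : {group gT}) p :
  prime p -> F \isog [set: 'Z_p * 'Z_p] -> F \in 'E_p^2(F).
Proof.
move=> p_pr isoF; apply/pnElemP.
split; rewrite ?(isog_abelem isoF) ?abelem_Zp2 // (card_isog isoF) cardsT.
by rewrite card_prod card_ord Zp_cast ?prime_gt1 // mulnn pfactorK.
Qed.

Theorem lemma5p2 (gT : finGroupType) (G F H : {group gT}) (p m : nat) :
  prime p -> odd p ->
  [Frobenius G = F ><| H] ->
  abelian G^`(1) ->
  F \isog [set: 'Z_p * 'Z_p] ->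
  cyclic H -> #|H| = m -> (m %| p.-1)%N ->
  num_conj_classes_subgroups_of_order G p = p.+1 ->
  #|[set Q : {group gT} | Q \subset F & #|Q| == p]| = p.+1 /\
  (forall Q : {group gT},
     Q :=: 1 \/ (Q \subset F /\ #|Q| = p) \/ Q :=: F ->
     'N_G(Q) = G /\ 'N_G(Q) / Q = G / Q) /\
  (forall Q : {group gT},
     Q :=: 1 \/ (Q \subset F /\ #|Q| = p) ->
     [Frobenius (G / Q) = (F / Q) ><| ((H <*> Q) / Q)] /\ (H <*> Q) / Q \isog H).
Proof.
move=> p_pr _ frobG _ isoF _ _ _ nclG.
have [defG ntF _ _ _] := Frobenius_context frobG.
have [nsFG sHG _ _ _] := sdprod_context defG.
have EF : F \in 'E_p^2(F) by apply: isog_Zp2_p2Elem isoF.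
have [_ _ oF] := pnElemPcard EF.
have cardE1 : #|'E_p^1(F)| = p.+1 := card_p1Elem_p2Elem EF.
have piFp : p \in \pi(F) by rewrite /= oF pi_of_exp // pi_of_prime // inE.
have nsQG (Q : {group gT}) :
  Q :=: 1 \/ (Q \subset F /\ #|Q| = p) \/ Q :=: F -> Q <| G.
  case=> [-> | [[sQF oQ] | ->]]; rewrite ?normal1 //.
  have sQG := subset_trans sQF (normal_sub nsFG).
  rewrite /normal sQG (subgroups_of_order_norm sQG oQ) //.
  by rewrite nclG -cardE1 (Frobenius_card_subgroups_of_prime_order frobG).
split; first by rewrite -cardE1 p1ElemE //; apply: eq_card => Q; rewrite !inE.
split=> [Q /nsQG/normal_norm/setIidPl-> // | Q hQ].
have {}nsQG : Q <| G by apply: nsQG; tauto.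
have nQH := subset_trans sHG (normal_norm nsQG).
have sQF : Q \subset F by case: hQ => [-> | []]; rewrite ?sub1G.
have ltQF : Q \proper F.
  case: hQ => [-> | [_ oQ]]; first by rewrite proper1G.
  by rewrite properEcard sQF oQ oF -{1}(expn1 p) ltn_exp2l ?prime_gt1.
rewrite quotientYidr //; split; first exact: Frobenius_quotient.
exact: Frobenius_compl_quotient_isog frobG Q sQF nQH.
Qed.
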